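(* For every positive integer $N$, the space of slab tilings of the box $[0,4]\times[0,4]\times[0,N]$ has exactly one connected component under flips.
   Context: A slab is a $2\times2\times1$ box (any orientation) which is a union of four unit cubes $[x,x+1]\times[y,y+1]\times[z,z+1]$, $(x,y,z)\in\mathbb{Z}^3$. A flip takes two slabs whose union is a $2\times2\times2$ cube and replaces them by one of the two other pairs of slabs tiling that cube. Flip components are the connected components of the graph whose vertices are the slab tilings and whose edges join tilings differing by one flip. *)

From mathcomp Require Import all_boot.
From Stdlib Require Import Relation_Operators.
Set Implicit Arguments. Unset Strict Implicit. Unset Printing Implicit Defensive.

(* Unit cubes of the box [0,4]x[0,4]x[0,N]: the cube [x,x+1]x[y,y+1]x[z,z+1]
   is identified with its corner (x,y,z), x<4, y<4, z<N. *)
Definition cell (N : nat) : finType := ('I_4 * 'I_4 * 'I_N)%type.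

Definition cx N (c : cell N) : nat := c.1.1.
Definition cy N (c : cell N) : nat := c.1.2.
Definition cz N (c : cell N) : nat := c.2.

Definition box_cells N (x0 y0 z0 a b c : nat) : {set cell N} :=
  [set q : cell N | [&& x0 <= cx q < x0 + a, y0 <= cy q < y0 + b
                      & z0 <= cz q < z0 + c]].

Definition box_inside N (x0 y0 z0 a b c : nat) : bool :=
  [&& x0 + a <= 4, y0 + b <= 4 & z0 + c <= N].

Definition is_slab N (S : {set cell N}) : Prop :=
  exists x0 y0 z0 a b c,
    [|| [&& a == 2, b == 2 & c == 1], [&& a == 2, b == 1 & c == 2]
      | [&& a == 1, b == 2 & c == 2]] /\
    box_inside N x0 y0 z0 a b c /\ S = box_cells N x0 y0 z0 a b c.

Definition is_cube2 N (S : {set cell N}) : Prop :=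
  exists x0 y0 z0, box_inside N x0 y0 z0 2 2 2 /\ S = box_cells N x0 y0 z0 2 2 2.

Definition is_tiling N (T : {set {set cell N}}) : Prop :=
  partition T [set: cell N] /\ forall S, S \in T -> is_slab S.

Definition flip N (T T' : {set {set cell N}}) : Prop :=
  is_tiling T /\ is_tiling T' /\
  exists a b c d : {set cell N},
    a \in T /\ b \in T /\ a != b /\ is_cube2 (a :|: b) /\
    is_slab c /\ is_slab d /\ [disjoint c & d] /\
    c :|: d = a :|: b /\ [set c; d] != [set a; b] /\
    T' = (T :\: [set a; b]) :|: [set c; d].

Definition one_flip_component N : Prop :=
  (exists T, is_tiling (N:=N) T) /\
  forall T T' : {set {set cell N}}, is_tiling T -> is_tiling T' ->
    clos_refl_trans _ (@flip N) T T'.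

From mathcomp Require Import all_boot zify.
From Stdlib Require Import Relation_Operators.
Set Implicit Arguments. Unset Strict Implicit. Unset Printing Implicit Defensive.

(* Sweep the box from the bottom.  Call the layers below k canonical when each of them is
   tiled by the four flat slabs over the 2x2 grid.  Then no slab crosses height k, so the
   slabs meeting the window of the next h = min(4, N - k) layers tile that window (vertical
   slabs may stick out of its top, unless the window reaches the top of the box).  A
   certified exhaustive search over all such window tilings shows that each one either has
   a canonical bottom layer or allows a flip inside the window that strictly increases a
   lexicographic potential computed layer by layer.  The potential takes finitely many
   values, so finitely many flips make layer k canonical without touching the layers below.
   At k = N the tiling is the canonical one, and flips are reversible. *)

(** * Flips and the canonical tiling *)

Section Partitions.
Variable T : finType.
Implicit Types (P : {set {set T}}) (A B C E D : {set T}).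

Lemma trivIset_eq P A B x :
  trivIset P -> A \in P -> B \in P -> x \in A -> x \in B -> A = B.
Proof. by move=> tiP AP BP xA xB; rewrite -(def_pblock tiP AP xA) (def_pblock tiP BP xB). Qed.

Lemma partition_replace2 P D A B C E :
  partition P D -> A \in P -> B \in P -> A != B -> C != set0 -> E != set0 ->
  [disjoint C & E] -> C :|: E = A :|: B ->
  partition ((P :\: [set A; B]) :|: [set C; E]) D.
Proof.
move=> partP AP BP neAB C0 E0 dCE defCE.
have sAB : A :|: B \subset D by rewrite subUset !(partitionS partP).
have partPAB : partition (P :\ A :\ B) (D :\: (A :|: B)).
  by rewrite -setDDl; apply: partitionD1; [apply: partitionD1 | rewrite !inE eq_sym neAB].
have dAB : [disjoint A :|: B & D :\: (A :|: B)].
  by rewrite -setI_eq0 setIDA setDIl setDv set0I.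
have dCAB : [disjoint C & D :\: (A :|: B)] by apply: disjointWl dAB; rewrite -defCE subsetUl.
have dEAB : [disjoint E & D :\: (A :|: B)] by apply: disjointWl dAB; rewrite -defCE subsetUr.
have dC : [disjoint C & E :|: (D :\: (A :|: B))].
  by rewrite -setI_eq0 setIUr (disjoint_setI0 dCE) (disjoint_setI0 dCAB) setU0.
have := partitionU1 (partitionU1 partPAB E0 dEAB) C0 dC.
congr partition.
- apply/setP => F; rewrite !inE.
  by case: (F == A); case: (F == B); case: (F == C); case: (F == E); rewrite ?orbT ?orbF.
- by rewrite setUA defCE -[RHS](setID D (A :|: B)) (setIidPr sAB).
Qed.

Lemma disjoint_neq A B : [disjoint A & B] -> A != set0 -> A != B.
Proof.
move=> dAB /set0Pn[x xA]; apply: contraTneq dAB => <-.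
by apply/pred0Pn; exists x; rewrite /= xA.
Qed.

Lemma replace2K P A B C E :
  trivIset P -> A \in P -> B \in P -> C != set0 -> E != set0 -> C :|: E = A :|: B ->
  (((P :\: [set A; B]) :|: [set C; E]) :\: [set C; E]) :|: [set A; B] = P.
Proof.
move=> tiP AP BP C0 E0 defCE.
have inAB F : F \in P -> F != set0 -> F \subset A :|: B -> (F == A) || (F == B).
  move=> FP /set0Pn[x xF] /subsetP/(_ x xF); rewrite inE => /orP[xA | xB].
  - by rewrite (trivIset_eq tiP FP AP xF xA) eqxx.
  - by rewrite (trivIset_eq tiP FP BP xF xB) eqxx orbT.
have CAB : C \in P -> (C == A) || (C == B) by move/inAB; apply=> //; rewrite -defCE subsetUl.
have EAB : E \in P -> (E == A) || (E == B) by move/inAB; apply=> //; rewrite -defCE subsetUr.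
apply/setP => F; rewrite !inE.
case: (eqVneq F A) => [-> | FA]; first by rewrite AP orbT.
case: (eqVneq F B) => [-> | FB]; first by rewrite BP !orbT.
case: (eqVneq F C) => [FC | _].
  by rewrite FC in FA FB *; apply/esym/negP => /CAB; rewrite (negbTE FA) (negbTE FB).
case: (eqVneq F E) => [FE | _].
  by rewrite FE in FA FB *; apply/esym/negP => /EAB; rewrite (negbTE FA) (negbTE FB).
by rewrite !orbF.
Qed.
End Partitions.

Lemma slab_neq0 N (S : {set cell N}) : is_slab S -> S != set0.
Proof.
case=> x0 [y0 [z0 [a [b [c [ext [/and3P[ix iy iz] ->]]]]]]].
have hx : x0 < 4 by lia.
have hy : y0 < 4 by lia.
have hz : z0 < N by lia.
apply/set0Pn; exists (Ordinal hx, Ordinal hy, Ordinal hz).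
rewrite inE /cx /cy /cz /=; lia.
Qed.

Lemma tiling_trivIset N (T : {set {set cell N}}) : is_tiling T -> trivIset T.
Proof. by case=> /and3P[]. Qed.

Lemma tiling_cover N (T : {set {set cell N}}) (r : cell N) :
  is_tiling T -> exists2 S, S \in T & r \in S.
Proof.
case=> /cover_partition covT _; have : r \in cover T by rewrite covT inE.
by case/bigcupP => S; exists S.
Qed.

Lemma flip_sym N (T T' : {set {set cell N}}) : flip T T' -> flip T' T.
Proof.
case=> tilT [tilT' [a [b [c [d [aT [bT [neab [cube [sc [sd [dcd [defcd [neq defT']]]]]]]]]]]]]].
have [sa sb] := (tilT.2 a aT, tilT.2 b bT).
have [c0 d0] := (slab_neq0 sc, slab_neq0 sd).
split=> //; split=> //; exists c, d, a, b.
do !split=> //.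
- by rewrite defT' !inE eqxx orbT.
- by rewrite defT' !inE eqxx !orbT.
- exact: disjoint_neq.
- by rewrite defcd.
- exact: (trivIsetP (tiling_trivIset tilT) a b aT bT neab).
- by rewrite eq_sym.
- by rewrite defT' (replace2K (tiling_trivIset tilT) aT bT c0 d0 defcd).
Qed.

Lemma flip_connected_sym N (T T' : {set {set cell N}}) :
  clos_refl_trans _ (@flip N) T T' -> clos_refl_trans _ (@flip N) T' T.
Proof.
elim=> [x y /flip_sym | x | x y z _ xy _ yz]; last exact: rt_trans yz xy.
- exact: rt_step.
- exact: rt_refl.
Qed.

Section CanonicalTiling.
Variable N : nat.
Implicit Types (T : {set {set cell N}}) (r s : cell N).

Definition canon_slab r : {set cell N} :=
  box_cells N (cx r %/ 2 * 2) (cy r %/ 2 * 2) (cz r) 2 2 1.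

Definition canonical_below k T := forall z x y, z < k ->
  x \in [:: 0; 2] -> y \in [:: 0; 2] -> box_cells N x y z 2 2 1 \in T.

Lemma canonical_below0 T : canonical_below 0 T.
Proof. by []. Qed.

Lemma cell_bounds r : [/\ cx r < 4, cy r < 4 & cz r < N].
Proof. by split; apply: ltn_ord. Qed.

Lemma mem_canon_slab r : r \in canon_slab r.
Proof. by case: (cell_bounds r) => *; rewrite inE; lia. Qed.

Lemma canon_slab_eq r s : s \in canon_slab r -> canon_slab s = canon_slab r.
Proof.
rewrite inE => sr; rewrite /canon_slab.
have -> : cx s %/ 2 * 2 = cx r %/ 2 * 2 by lia.
have -> : cy s %/ 2 * 2 = cy r %/ 2 * 2 by lia.
by have -> : cz s = cz r by lia.
Qed.

Lemma canon_slab_is_slab r : is_slab (canon_slab r).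
Proof.
case: (cell_bounds r) => *.
exists (cx r %/ 2 * 2), (cy r %/ 2 * 2), (cz r), 2, 2, 1.
by do !split; rewrite /box_inside; lia.
Qed.

Lemma canonical_below_slab k T r : canonical_below k T -> cz r < k -> canon_slab r \in T.
Proof.
move=> canT rk; have [rx ry _] := cell_bounds r.
by apply: canT => //; rewrite !inE; lia.
Qed.

Lemma canonical_below_flat k T S r : is_tiling T -> canonical_below k T ->
  S \in T -> r \in S -> cz r < k -> S = canon_slab r.
Proof.
move=> tilT canT ST rS rk.
exact: trivIset_eq (tiling_trivIset tilT) ST (canonical_below_slab canT rk) rS (mem_canon_slab r).
Qed.

Lemma canonical_below_high k T S r r' : is_tiling T -> canonical_below k T ->
  S \in T -> r \in S -> r' \in S -> k <= cz r -> k <= cz r'.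
Proof.
move=> tilT canT ST rS r'S kr; rewrite leqNgt; apply/negP => r'k.
move: rS; rewrite (canonical_below_flat tilT canT ST r'S r'k) inE; lia.
Qed.

Definition canon_tiling : {set {set cell N}} := [set canon_slab r | r in [set: cell N]].

Lemma canon_tiling_is_tiling : is_tiling canon_tiling.
Proof.
split; last by move=> S /imsetP[r _ ->]; apply: canon_slab_is_slab.
apply/and3P; split.
- apply/eqP/setP => r; rewrite inE; apply/bigcupP; exists (canon_slab r).
    exact: imset_f.
  exact: mem_canon_slab.
- apply/trivIsetP => _ _ /imsetP[r _ ->] /imsetP[s _ ->]; apply: contraNT.
  case/pred0Pn => x /andP[/canon_slab_eq <- /canon_slab_eq <-].
  by rewrite eqxx.
- apply/imsetP => -[r _ r0]; have := mem_canon_slab r.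
  by rewrite -r0 inE.
Qed.

Lemma canonical_tiling_unique T T' : is_tiling T -> is_tiling T' ->
  canonical_below N T -> canonical_below N T' -> T = T'.
Proof.
suff sub T1 T2 : is_tiling T1 -> canonical_below N T1 -> canonical_below N T2 -> {subset T1 <= T2}.
  by move=> tilT tilT' canT canT'; apply/setP => S; apply/idP/idP; apply: sub.
move=> tilT1 canT1 canT2 S ST1.
case/set0Pn: (slab_neq0 (tilT1.2 S ST1)) => r rS.
have [_ _ rN] := cell_bounds r.
by rewrite (canonical_below_flat tilT1 canT1 ST1 rS rN) (canonical_below_slab canT2 rN).
Qed.

End CanonicalTiling.

(** * Windows and the certified search *)

Definition wslab := (nat * nat * nat * nat)%type.
Definition wcell := (nat * nat * nat)%type.

Definition ori (d : wslab) := d.1.1.1.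
Definition px (d : wslab) := d.1.1.2.
Definition py (d : wslab) := d.1.2.
Definition pz (d : wslab) := d.2.

(* A window slab is (orientation, corner); orientation 0 is 2x2x1 (flat), 1 is 2x1x2
   and 2 is 1x2x2. *)
Definition ext_x (o : nat) := if o == 2 then 1 else 2.
Definition ext_y (o : nat) := if o == 1 then 1 else 2.
Definition ext_z (o : nat) := if o == 0 then 1 else 2.

Definition in_wslab (d : wslab) (q : wcell) : bool :=
  [&& px d <= q.1.1 < px d + ext_x (ori d), py d <= q.1.2 < py d + ext_y (ori d)
    & pz d <= q.2 < pz d + ext_z (ori d)].

(* With [open_top], the window lies below the top of the box and a vertical slab starting
   in its top layer may stick out of it. *)
Definition wslab_ok (h : nat) (open_top : bool) (d : wslab) : bool :=
  [&& ori d < 3, px d + ext_x (ori d) <= 4, py d + ext_y (ori d) <= 4, pz d < h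
    & (pz d + ext_z (ori d) <= h) || open_top].

Definition wslab_enum (h : nat) : seq wslab :=
  [seq (ox.1, ox.2, yz.1, yz.2) | ox <- [seq (o, x) | o <- iota 0 3, x <- iota 0 4],
                                  yz <- [seq (y, z) | y <- iota 0 4, z <- iota 0 h]].

Definition wslabs h open_top : seq wslab := [seq d <- wslab_enum h | wslab_ok h open_top d].

Definition wcell_of (i : nat) : wcell := (i %% 4, (i %/ 4) %% 4, i %/ 16).
Definition wcell_index (q : wcell) := q.1.1 + 4 * q.1.2 + 16 * q.2.
Definition wcells (h : nat) : seq wcell := [seq wcell_of i | i <- iota 0 (16 * h)].

(* Distinct window slabs differ on a cell of the window; this makes window slabs, even
   those cut off at the top of the box, determined by their cells in the box. *)
Definition wslabs_separated h open_top :=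
  all (fun d => all (fun d' => (d == d') || has (fun q => in_wslab d q != in_wslab d' q) (wcells h))
    (wslabs h open_top)) (wslabs h open_top).

Definition within_window (h : nat) (d : wslab) := pz d + ext_z (ori d) <= h.

Definition partners (d e : wslab) : bool :=
  [&& ori e == ori d, pz e == pz d &
   if ori d == 1 then (px e == px d) && ((py e == (py d).+1) || ((py e).+1 == py d))
   else (py e == py d) && ((px e == (px d).+1) || ((px e).+1 == px d))].

(* Any potential would serve, as long
   as the search finds increasing flips; this one favours flat slabs, then vertical slabs
   within the window having a parallel partner in the same layer. *)
Definition layer_weight (h : nat) (l : seq wslab) : seq nat :=
  let H := count (fun d => ori d == 0) l in
  let V := count (fun d => [&& ori d != 0, within_window h d & has (partners d) l]) l in
  [:: 4 * H + 2 * V; 4 * H].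

Fixpoint lexlt (v w : seq nat) : bool :=
  match v, w with
  | a :: v', b :: w' => (a < b) || ((a == b) && lexlt v' w')
  | _, _ => false
  end.

Definition wcube := (nat * nat * nat)%type.

Definition cube_pair (q : wcube) (o : nat) : seq wslab :=
  let: (X, Y, Z) := q in
  if o == 0 then [:: (0, X, Y, Z); (0, X, Y, Z.+1)]
  else if o == 1 then [:: (1, X, Y, Z); (1, X, Y.+1, Z)]
  else [:: (2, X, Y, Z); (2, X.+1, Y, Z)].

(* A flip (q, o, o') replaces the pair of orientation o in the cube q by that of orientation o'. *)
Definition wflip := (wcube * nat * nat)%type.

Definition wcube_ok (h : nat) (q : wcube) := [&& q.1.1 <= 2, q.1.2 <= 2 & q.2.+2 <= h].
Definition wflip_ok (h : nat) (f : wflip) :=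
  [&& wcube_ok h f.1.1, f.1.2 < 3, f.2 < 3 & f.1.2 != f.2].

Definition canon_layer : seq wslab := [:: (0, 0, 0, 0); (0, 2, 0, 0); (0, 0, 2, 0); (0, 2, 2, 0)].

(* Short-circuiting [has] and [all]: under [vm_compute], [||] and [&&] evaluate both arguments. *)
Fixpoint has_lazy (T : Type) (p : T -> bool) (s : seq T) : bool :=
  if s is x :: s' then (if p x then true else has_lazy p s') else false.
Fixpoint all_lazy (T : Type) (p : T -> bool) (s : seq T) : bool :=
  if s is x :: s' then (if p x then all_lazy p s' else false) else true.

Definition covered (P : seq wslab) (q : wcell) := has_lazy (fun d => in_wslab d q) P.

Definition corner_cands h open_top (c : wcell) : seq wslab :=
  [seq d <- [:: (0, c.1.1, c.1.2, c.2); (1, c.1.1, c.1.2, c.2); (2, c.1.1, c.1.2, c.2)]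
     | wslab_ok h open_top d].

Definition cands h open_top (wc : seq wcell) (P : seq wslab) (c : wcell) : seq wslab :=
  [seq d <- corner_cands h open_top c
     | all_lazy (fun q => if in_wslab d q then ~~ covered P q else true) wc].

Definition layer_of (P : seq wslab) (z : nat) := undup [seq d <- P | pz d == z].

Definition weight2 h (P : seq wslab) (Z : nat) :=
  layer_weight h (layer_of P Z) ++ layer_weight h (layer_of P Z.+1).

Definition flips_of (P : seq wslab) : seq wflip :=
  [seq ((px d, py d, pz d), ori d, o') | d <- P, o' <- iota 0 3].

Definition apply_flip (P : seq wslab) (f : wflip) : seq wslab :=
  cube_pair f.1.1 f.2 ++ [seq d <- P | d \notin cube_pair f.1.1 f.1.2].

(* Closing test at a search node whose layers below [hi] are complete: layer 0 is canonical,
   or the flip of a cube within these layers reaching layer [lo - 1] increases the potential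
   (cubes below were tried at the parent node). *)
Definition closes h (P : seq wslab) (lo hi : nat) : bool :=
  if all_lazy (fun d => d \in P) canon_layer then true else
  has_lazy (fun f =>
    if [&& lo <= (f.1.1.2).+2 <= hi, wflip_ok h f
         & all_lazy (fun d => d \in P) (cube_pair f.1.1 f.1.2)]
    then lexlt (weight2 h P f.1.1.2) (weight2 h (apply_flip P f) f.1.1.2) else false)
    (flips_of P).

(* Depth-first enumeration, with fuel [n], of the window tilings extending [P], always
   covering the first uncovered cell of [wc] next; [t] is the number of layers that were
   complete at the parent node. *)
Fixpoint search h open_top (wc : seq wcell) (n : nat) (P : seq wslab) (t : nat) : bool :=
  if n is n'.+1 then
    let c := find (fun q => ~~ covered P q) wc in
    let L := if c < size wc then (nth (0, 0, 0) wc c).2 else h in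
    if (if t < L then closes h P t.+1 L else false) then true else
    if c < size wc then
      all_lazy (fun d => search h open_top wc n' (d :: P) L)
        (cands h open_top wc P (nth (0, 0, 0) wc c))
    else false
  else false.

Definition window_certified h open_top :=
  [&& uniq (wslabs h open_top), wslabs_separated h open_top
    & search h open_top (wcells h) 64 [::] 0].

Lemma window_certified4 : window_certified 4 true. Proof. by vm_compute. Qed.
Lemma window_certified3 : window_certified 3 false. Proof. by vm_compute. Qed.
Lemma window_certified2 : window_certified 2 false. Proof. by vm_compute. Qed.
Lemma window_certified1 : window_certified 1 false. Proof. by vm_compute. Qed.

(** * Soundness of the search *)

Lemma has_lazyE T (p : T -> bool) s : has_lazy p s = has p s.
Proof. by elim: s => //= x s ->; case: (p x). Qed.

Lemma all_lazyE T (p : T -> bool) s : all_lazy p s = all p s.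
Proof. by elim: s => //= x s ->; case: (p x). Qed.

Lemma coveredP P q : reflect (exists2 d, d \in P & in_wslab d q) (covered P q).
Proof. by rewrite /covered has_lazyE; apply: hasP. Qed.

Lemma size_wcells h : size (wcells h) = 16 * h.
Proof. by rewrite size_map size_iota. Qed.

Lemma nth_wcells h i : i < 16 * h -> nth (0, 0, 0) (wcells h) i = wcell_of i.
Proof. by move=> ih; rewrite (nth_map 0) ?size_iota // nth_iota. Qed.

Lemma wcell_indexK (q : wcell) : q.1.1 < 4 -> q.1.2 < 4 -> wcell_of (wcell_index q) = q.
Proof.
case: q => [[x y] z] /= x4 y4; rewrite /wcell_of /wcell_index /=.
have -> : (x + 4 * y + 16 * z) %% 4 = x by lia.
have -> : (x + 4 * y + 16 * z) %/ 4 %% 4 = y by lia.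
by have -> : (x + 4 * y + 16 * z) %/ 16 = z by lia.
Qed.

Lemma wcell_ofK i : wcell_index (wcell_of i) = i.
Proof. rewrite /wcell_index /wcell_of /=; lia. Qed.

Lemma mem_wcells h q : (q \in wcells h) = [&& q.1.1 < 4, q.1.2 < 4 & q.2 < h].
Proof.
apply/mapP/idP => [[i] | ].
  by rewrite mem_iota => /andP[_ ih] ->; rewrite /wcell_of /=; apply/and3P; split; lia.
case: q => [[x y] z] /= /and3P[x4 y4 zh]; exists (wcell_index (x, y, z)).
  by rewrite mem_iota /wcell_index /=; lia.
by rewrite wcell_indexK.
Qed.

Lemma wcell_index_lt h (q : wcell) : q \in wcells h -> wcell_index q < 16 * h.
Proof. by rewrite mem_wcells /wcell_index; case: q => [[x y] z] /=; lia. Qed.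

Lemma ext_gt0 o : [/\ 0 < ext_x o, 0 < ext_y o & 0 < ext_z o].
Proof. by rewrite /ext_x /ext_y /ext_z; split; case: ifP. Qed.

Lemma wslab_ok_bounds h cr d : wslab_ok h cr d -> [/\ ori d < 3, px d < 4, py d < 4 & pz d < h].
Proof. by have [? ? _] := ext_gt0 (ori d); case/and5P => *; split; lia. Qed.

Lemma mem_wslabs h cr d : (d \in wslabs h cr) = wslab_ok h cr d.
Proof.
rewrite mem_filter andb_idr // => /wslab_ok_bounds [].
case: d => [[[o x] y] z]; rewrite /ori /px /py /pz /= => o3 x4 y4 zh.
have -> : (o, x, y, z) = (fun ox yz => (ox.1, ox.2, yz.1, yz.2) : wslab) (o, x) (y, z) by [].
by apply: allpairs_f; apply: allpairs_f; rewrite mem_iota; lia.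
Qed.

Lemma in_wslab_corner d : in_wslab d (px d, py d, pz d).
Proof. by have [? ? ?] := ext_gt0 (ori d); rewrite /in_wslab /=; lia. Qed.

Lemma corner_in_wcells h cr d : wslab_ok h cr d -> (px d, py d, pz d) \in wcells h.
Proof. by case/wslab_ok_bounds => *; rewrite mem_wcells /=; apply/and3P. Qed.

Lemma cube_pair_ok h cr q o : wcube_ok h q -> o < 3 -> {subset cube_pair q o <= wslabs h cr}.
Proof.
case: q => [[X Y] Z] /and3P[/= X2 Y2 Zh].
case: o => [|[|[|o]]] // _ d; rewrite /cube_pair /= !inE => /orP[]/eqP->;
  rewrite mem_wslabs /wslab_ok /ori /px /py /pz /ext_x /ext_y /ext_z /=; lia.
Qed.

Lemma cube_pair_ori q o d : o < 3 -> d \in cube_pair q o -> ori d = o.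
Proof.
case: q => [[X Y] Z]; case: o => [|[|[|o]]] // _.
all: by rewrite /cube_pair !inE => /orP[]/eqP->.
Qed.

Lemma cube_pair_pz q o d : d \in cube_pair q o -> pz d = q.2 \/ pz d = q.2.+1.
Proof.
case: q => [[X Y] Z]; rewrite /cube_pair /=.
case: ifP => _; [|case: ifP => _]; rewrite !inE => /orP[]/eqP->.
all: by [left | right].
Qed.

Lemma layer_weight_perm h l1 l2 : uniq l1 -> uniq l2 -> l1 =i l2 ->
  layer_weight h l1 = layer_weight h l2.
Proof.
move=> u1 u2 e; have pe := uniq_perm u1 u2 e; rewrite /layer_weight.
under [count _ l1 in X in 2 * X]eq_count => d do rewrite (eq_has_r e).
by rewrite !(permP pe).
Qed.

Lemma lexlt_catl u v w : lexlt (u ++ v) (u ++ w) = lexlt v w.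
Proof. by elim: u => //= a u ->; rewrite ltnn eqxx. Qed.

Lemma lexlt_catr v w u : size v = size w -> lexlt v w -> lexlt (v ++ u) (w ++ u).
Proof.
elim: v w => [|a v IH] [|b w] //= [e] /orP[-> // | /andP[-> vw]].
by rewrite IH ?orbT.
Qed.

Definition layer h cr (mem : pred wslab) (z : nat) : seq wslab :=
  [seq d <- wslabs h cr | mem d && (pz d == z)].

Definition potential h cr (mem : pred wslab) : seq nat :=
  flatten [seq layer_weight h (layer h cr mem z) | z <- iota 0 h].

Definition flip_pred (mem : pred wslab) (f : wflip) : pred wslab :=
  fun d => (mem d && (d \notin cube_pair f.1.1 f.1.2)) || (d \in cube_pair f.1.1 f.2).

Lemma mem_layer h cr m z d : (d \in layer h cr m z) = [&& d \in wslabs h cr, m d & pz d == z].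
Proof. by rewrite mem_filter andbC. Qed.

Lemma mem_layer_of P z d : (d \in layer_of P z) = (d \in P) && (pz d == z).
Proof. by rewrite mem_undup mem_filter andbC. Qed.

Record window_tiling h cr (mem : pred wslab) : Prop := WindowTiling {
  window_sub : forall d, mem d -> d \in wslabs h cr;
  window_cover : forall q, q \in wcells h -> exists2 d, mem d & in_wslab d q;
  window_disjoint : forall d d' q, q \in wcells h ->
    mem d -> mem d' -> in_wslab d q -> in_wslab d' q -> d = d'
}.

Section SearchSound.
Variables (h : nat) (cr : bool) (mem : pred wslab).
Hypotheses (uniq_wslabs : uniq (wslabs h cr)) (tilW : window_tiling h cr mem).
Local Notation wc := (wcells h).

Definition improving_flip (f : wflip) := [&& wflip_ok h f, all mem (cube_pair f.1.1 f.1.2)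
  & lexlt (potential h cr mem) (potential h cr (flip_pred mem f))].

Definition agrees_below (P : seq wslab) (L : nat) :=
  forall d, pz d < L -> (d \in wslabs h cr) && mem d = (d \in P).

Local Notation weight m z := (layer_weight h (layer h cr m z)).

Lemma potential_split (m : pred wslab) Z : Z.+2 <= h ->
  potential h cr m = flatten [seq weight m z | z <- iota 0 Z] ++
    (weight m Z ++ weight m Z.+1) ++ flatten [seq weight m z | z <- iota Z.+2 (h - Z.+2)].
Proof.
move=> Zh; rewrite /potential.
have -> : iota 0 h = iota 0 Z ++ [:: Z; Z.+1] ++ iota Z.+2 (h - Z.+2).
  by rewrite -{1}(subnKC Zh) -addn2 !iotaD catA add0n addn2.
by rewrite !map_cat !flatten_cat.
Qed.

Lemma layer_flip_pred f z : z != f.1.1.2 -> z != f.1.1.2.+1 ->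
  layer h cr (flip_pred mem f) z = layer h cr mem z.
Proof.
move=> nZ nZ1; apply: eq_filter => d; rewrite /flip_pred.
have [dz | _] := eqVneq (pz d) z; last by rewrite !andbF.
have notin o : d \notin cube_pair f.1.1 o.
  by apply/negP => /cube_pair_pz[]; rewrite dz => /eqP; apply/negP.
by rewrite notin (negbTE (notin _)) andbT orbF.
Qed.

Lemma potential_flip_lt f (Z := f.1.1.2) : wcube_ok h f.1.1 ->
  lexlt (weight mem Z ++ weight mem Z.+1)
        (weight (flip_pred mem f) Z ++ weight (flip_pred mem f) Z.+1) ->
  lexlt (potential h cr mem) (potential h cr (flip_pred mem f)).
Proof.
case/and3P => _ _ Zh lt; rewrite !(potential_split _ Zh).
have off s : {in s, forall z, (z != Z) && (z != Z.+1)} ->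
    [seq weight (flip_pred mem f) z | z <- s] = [seq weight mem z | z <- s].
  by move=> sZ; apply/eq_in_map => z /sZ /andP[nZ nZ1]; rewrite layer_flip_pred.
rewrite !off ?lexlt_catl; first exact: lexlt_catr.
all: by move=> z; rewrite mem_iota -/Z; lia.
Qed.

Lemma layer_weight_agree P L z : agrees_below P L -> z < L ->
  weight mem z = layer_weight h (layer_of P z).
Proof.
move=> agP zL; apply: layer_weight_perm; [exact: filter_uniq | exact: undup_uniq |].
move=> d; rewrite mem_layer mem_layer_of andbA.
have [dz | _] := eqVneq (pz d) z; last by rewrite !andbF.
by rewrite !andbT agP // dz.
Qed.

Lemma layer_weight_agree_flip P L f z : wflip_ok h f -> agrees_below P L -> z < L ->
  weight (flip_pred mem f) z = layer_weight h (layer_of (apply_flip P f) z).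
Proof.
case/and4P => qok _ o2 _ agP zL.
apply: layer_weight_perm; [exact: filter_uniq | exact: undup_uniq |].
move=> d; rewrite mem_layer mem_layer_of mem_cat mem_filter /flip_pred.
have [dz | _] := eqVneq (pz d) z; last by rewrite !andbF.
rewrite !andbT; case: (boolP (d \in cube_pair _ f.2)) => [new | _].
  by rewrite orbT (cube_pair_ok cr qok o2 new).
by rewrite !orbF andbA agP ?dz // andbC.
Qed.

Lemma closes_sound P lo L : {subset P <= mem} -> agrees_below P L -> closes h P lo L ->
  all mem canon_layer \/ exists f, improving_flip f.
Proof.
move=> sPm agP; rewrite /closes all_lazyE; case: ifP => [canP _ | _].
  by left; apply/allP => d /(allP canP)/sPm.
rewrite has_lazyE => /hasP[f _]; case: ifP => // /and3P[/andP[_ ZL] fok].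
rewrite all_lazyE => pairP lt; right; exists f.
rewrite /improving_flip fok /=; apply/andP; split.
  by apply/allP => d /(allP pairP)/sPm.
have [qok _ _ _] := and4P fok; apply: potential_flip_lt => //.
have ZL' : f.1.1.2 < L := ltnW ZL.
by rewrite !(layer_weight_agree agP) // !(layer_weight_agree_flip fok agP).
Qed.

Lemma agrees_below_covered P L : {subset P <= mem} ->
  (forall q, q \in wc -> q.2 < L -> covered P q) -> agrees_below P L.
Proof.
move=> sPm covP d dL; apply/idP/idP => [/andP[dW md] | dP]; last first.
  by rewrite (window_sub tilW (sPm _ dP)); apply: sPm.
have dok : wslab_ok h cr d by rewrite -mem_wslabs.
have /covP/(_ dL)/coveredP[d' d'P d'c] := corner_in_wcells dok.
by rewrite (window_disjoint tilW (corner_in_wcells dok) md (sPm _ d'P) (in_wslab_corner d) d'c).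
Qed.

Lemma covered_before_find P q : q \in wc ->
  wcell_index q < find (fun q => ~~ covered P q) wc -> covered P q.
Proof.
move=> qW /(before_find (0, 0, 0)) /negbFE.
have := qW; rewrite mem_wcells => /and3P[qx qy _].
by rewrite nth_wcells ?wcell_indexK ?wcell_index_lt.
Qed.

Lemma uncovered_slab P d q q' : {subset P <= mem} -> mem d -> q' \in wc ->
  in_wslab d q -> in_wslab d q' -> ~~ covered P q -> ~~ covered P q'.
Proof.
move=> sPm md q'W dq dq'; apply: contra => /coveredP[d' d'P d'q'].
have ed := window_disjoint tilW q'W md (sPm _ d'P) dq' d'q'.
by apply/coveredP; exists d'; rewrite // -ed.
Qed.

Section FirstUncovered.
Variables (P : seq wslab) (d : wslab).
Hypotheses (sPm : {subset P <= mem}) (md : mem d).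
Let c := find (fun q => ~~ covered P q) wc.
Let q := nth (0, 0, 0) wc c.
Hypotheses (cW : c < size wc) (dq : in_wslab d q).

Let q_unc : ~~ covered P q.
Proof. by apply: (nth_find _ (a := fun q => ~~ covered P q)); rewrite has_find. Qed.

Let dok : wslab_ok h cr d.
Proof. by rewrite -mem_wslabs (window_sub tilW md). Qed.

Lemma first_uncovered_corner : (px d, py d, pz d) = q.
Proof.
have qW : q \in wc by apply: mem_nth.
have qc : wcell_index q = c by rewrite /q nth_wcells -?size_wcells // wcell_ofK.
have cornerW := corner_in_wcells dok.
have /and3P[qx qy _] : [&& q.1.1 < 4, q.1.2 < 4 & q.2 < h] by rewrite -mem_wcells.
have /and3P[px4 py4 _] : [&& px d < 4, py d < 4 & pz d < h] by rewrite -(mem_wcells h (_, _, _)).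
have : wcell_index (px d, py d, pz d) <= c.
  by rewrite -qc; move: dq; rewrite /in_wslab /wcell_index; case: (q) => [[x y] z] /=; lia.
rewrite leq_eqVlt => /orP[/eqP | lt_c].
  by rewrite -qc => /(congr1 wcell_of); rewrite !wcell_indexK.
have := uncovered_slab sPm md cornerW dq (in_wslab_corner d) q_unc.
by rewrite covered_before_find.
Qed.

Lemma first_uncovered_cand : d \in cands h cr wc P q.
Proof.
rewrite mem_filter all_lazyE; apply/andP; split.
  apply/allP => q' q'W; case: ifP => // dq'.
  exact: uncovered_slab sPm md q'W dq dq' q_unc.
rewrite mem_filter dok -first_uncovered_corner /=.
have [o3 _ _ _] := wslab_ok_bounds dok.
case: d md dq o3 => [[[o x] y] z] _ _.
by rewrite /ori /=; case: o => [|[|[|o]]] //= _; rewrite !inE eqxx ?orbT.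
Qed.

End FirstUncovered.

Theorem search_sound n P t : search h cr wc n P t -> {subset P <= mem} ->
  all mem canon_layer \/ exists f, improving_flip f.
Proof.
elim: n P t => [//|n IH] P t /=.
set c := find _ _; set L := if c < size wc then _ else h.
move=> srch sPm.
have agP : agrees_below P L.
  apply: agrees_below_covered => // q qW qL; apply: covered_before_find; rewrite -/c //.
  have := wcell_index_lt qW; move: qW qL; rewrite /L size_wcells mem_wcells.
  case: ifP => cW; rewrite ?nth_wcells // /wcell_of /wcell_index; case: q => [[x y] z] /=; lia.
case: ifP srch => [cl _ | _]; first by move: cl; case: ifP => // _; apply: closes_sound.
case: ifP => // cW; rewrite all_lazyE => /allP srch.
have [d md dq] := window_cover tilW (mem_nth (0, 0, 0) cW).
apply: IH (srch d (first_uncovered_cand sPm md cW dq)) _ => d'.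
by rewrite inE => /orP[/eqP-> // | /sPm].
Qed.

End SearchSound.

(** * Windows of a tiling *)

Lemma slab_box N (S : {set cell N}) : is_slab S -> exists o x y z, [/\ o < 3,
  box_inside N x y z (ext_x o) (ext_y o) (ext_z o)
  & S = box_cells N x y z (ext_x o) (ext_y o) (ext_z o)].
Proof.
case=> x [y [z [a [b [c [abc [inS ->]]]]]]].
exists (if a == 1 then 2 else if b == 1 then 1 else 0), x, y, z.
by move: inS; case/or3P: abc => /and3P[/eqP-> /eqP-> /eqP->].
Qed.

Section Embedding.
Variable N : nat.
Implicit Types (T : {set {set cell N}}) (r : cell N).

Definition embed (k : nat) (d : wslab) : {set cell N} :=
  box_cells N (px d) (py d) (k + pz d) (ext_x (ori d)) (ext_y (ori d)) (ext_z (ori d)).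

Definition window k h cr T : pred wslab := fun d => (d \in wslabs h cr) && (embed k d \in T).

Lemma mem_embed k d r : k <= cz r -> (r \in embed k d) = in_wslab d (cx r, cy r, cz r - k).
Proof. by move=> kr; rewrite inE /in_wslab /=; lia. Qed.

Lemma window_cell k h q : q \in wcells h -> k + h <= N ->
  exists2 r : cell N, k <= cz r & (cx r, cy r, cz r - k) = q.
Proof.
case: q => [[x y] z]; rewrite mem_wcells /= => /and3P[x4 y4 zh] khN.
have kzN : k + z < N by lia.
by exists (Ordinal x4, Ordinal y4, Ordinal kzN); rewrite /cz /= ?addKn ?leq_addr.
Qed.

Lemma embed_corner k h cr d : wslab_ok h cr d -> k + h <= N ->
  exists2 r : cell N, r \in embed k d & cz r = k + pz d.
Proof.
move=> /wslab_ok_bounds[_ x4 y4 zh] khN; have kzN : k + pz d < N by lia.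
exists (Ordinal x4, Ordinal y4, Ordinal kzN) => //.
by have [? ? ?] := ext_gt0 (ori d); rewrite inE /cx /cy /cz /=; lia.
Qed.

Lemma embed_inj k h cr d d' : k + h <= N -> wslabs_separated h cr ->
  d \in wslabs h cr -> d' \in wslabs h cr -> embed k d = embed k d' -> d = d'.
Proof.
move=> khN sep dW d'W ed.
have /orP[/eqP // | /hasP[q qW]] := allP (allP sep d dW) d' d'W.
have [r kr <-] := window_cell qW khN.
by rewrite -!mem_embed // ed eqxx.
Qed.

Lemma cube_pair_embed k h q o : wcube_ok h q -> o < 3 -> k + h <= N ->
  exists a b, [/\ cube_pair q o = [:: a; b],
    embed k a :|: embed k b = box_cells N q.1.1 q.1.2 (k + q.2) 2 2 2,
    [disjoint embed k a & embed k b], is_slab (embed k a) & is_slab (embed k b)].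
Proof.
case: q => [[X Y] Z] /and3P[/= X2 Y2 Zh] o3 khN.
have slab o' x y z : o' < 3 -> x + ext_x o' <= 4 -> y + ext_y o' <= 4 -> k + z + ext_z o' <= N ->
    is_slab (embed k (o', x, y, z)).
  move=> o'3 xo yo zo; exists x, y, (k + z), (ext_x o'), (ext_y o'), (ext_z o'); split.
    by case: o' o'3 {xo yo zo} => [|[|[|]]].
  by rewrite /box_inside xo yo zo.
case: o o3 => [|[|[|o]]] // _;
  [exists (0, X, Y, Z), (0, X, Y, Z.+1) | exists (1, X, Y, Z), (1, X, Y.+1, Z)
  | exists (2, X, Y, Z), (2, X.+1, Y, Z)]; split => //.
all: try by apply: slab; rewrite /ext_x /ext_y /ext_z /=; lia.
all: rewrite /embed /ori /px /py /pz /ext_x /ext_y /ext_z /=.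
all: try by apply/setP => r; rewrite !inE; lia.
all: by rewrite -setI_eq0; apply/eqP/setP => r; rewrite !inE; lia.
Qed.

Lemma embed_eq k h cr d d' : k + h <= N -> wslabs_separated h cr ->
  d \in wslabs h cr -> d' \in wslabs h cr -> (embed k d == embed k d') = (d == d').
Proof. by move=> khN sep dW d'W; apply/eqP/eqP => [/(embed_inj khN sep dW d'W) | ->]. Qed.

Lemma embed_neq_low k h cr d x y z : k + h <= N -> d \in wslabs h cr -> z < k ->
  box_cells N x y z 2 2 1 != embed k d.
Proof.
rewrite mem_wslabs => khN dok zk; have [r rd rz] := embed_corner dok khN.
by apply: contraTneq rd => <-; rewrite inE rz; lia.
Qed.

End Embedding.

Arguments embed {N} k d.

Section WindowOfTiling.
Variables (N k h : nat) (cr : bool) (T : {set {set cell N}}).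
Hypotheses (tilT : is_tiling T) (canT : canonical_below k T) (khN : k + h <= N)
  (top : cr || (k + h == N)) (sep : wslabs_separated h cr).
Local Notation win := (window k h cr T).

Lemma window_cover_of q : q \in wcells h -> exists2 d, win d & in_wslab d q.
Proof.
move=> qW; have [r kr rq] := window_cell qW khN.
have [S ST rS] := tiling_cover r tilT.
have [o [x [y [z [o3 /and3P[xo yo zo] defS]]]]] := slab_box (tilT.2 S ST).
have [? ? ?] := ext_gt0 o.
have [x4 y4 zN] : [/\ x < 4, y < 4 & z < N] by split; lia.
have cornerS : (Ordinal x4, Ordinal y4, Ordinal zN) \in S by rewrite defS inE /cx /cy /cz /=; lia.
have kz : k <= z := canonical_below_high tilT canT ST rS cornerS kr.
have rz : z <= cz r by move: rS; rewrite defS inE => /and3P[_ _ /andP[]].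
have qh : q.2 < h by move: qW; rewrite mem_wcells => /and3P[].
have embS : embed k (o, x, y, z - k) = S by rewrite defS /embed /= subnKC.
exists (o, x, y, z - k); last by rewrite -rq -mem_embed // embS.
rewrite /window embS ST andbT mem_wslabs /wslab_ok /ori /px /py /pz /= o3 xo yo /=.
apply/andP; split; first by rewrite -rq /= in qh; lia.
by case: (cr) top => //= /eqP khN'; lia.
Qed.

Lemma window_disjoint_of d d' q : q \in wcells h ->
  win d -> win d' -> in_wslab d q -> in_wslab d' q -> d = d'.
Proof.
move=> qW /andP[dW dT] /andP[d'W d'T] dq d'q.
have [r kr rq] := window_cell qW khN.
have rd : r \in embed k d by rewrite mem_embed // rq.
have rd' : r \in embed k d' by rewrite mem_embed // rq.
exact: embed_inj khN sep dW d'W (trivIset_eq (tiling_trivIset tilT) dT d'T rd rd').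
Qed.

Lemma window_tiling_of : window_tiling h cr win.
Proof.
split; [by move=> d /andP[] | exact: window_cover_of | exact: window_disjoint_of].
Qed.

Lemma window_flip f : wflip_ok h f -> all win (cube_pair f.1.1 f.1.2) ->
  exists T', [/\ flip T T', canonical_below k T' & window k h cr T' =1 flip_pred win f].
Proof.
case/and4P => qok o1 o2 o12 pairT.
have [a [b [pab defab dab sa sb]]] := cube_pair_embed qok o1 khN.
have [c [d [pcd defcd dcd sc sd]]] := cube_pair_embed qok o2 khN.
move: pairT; rewrite pab /= andbT => /andP[/andP[aW aT] /andP[bW bT]].
have [cW dW] : c \in wslabs h cr /\ d \in wslabs h cr.
  by split; apply: (cube_pair_ok cr qok o2); rewrite pcd !inE eqxx ?orbT.
have old_new e e' : e \in cube_pair f.1.1 f.1.2 -> e' \in cube_pair f.1.1 f.2 -> e != e'.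
  move=> /(cube_pair_ori o1) oe /(cube_pair_ori o2) oe'.
  by apply: contra_neq o12 => ee'; rewrite -oe -oe' ee'.
have c_new : (embed k c : {set cell N}) \notin [set embed k a; embed k b].
  rewrite !inE !(embed_eq khN sep) // negb_or !(eq_sym c).
  by rewrite !old_new // ?pab ?pcd !inE eqxx ?orbT.
set T' := (T :\: [set embed k a; embed k b]) :|: [set embed k c; embed k d].
have partT' : partition T' [set: cell N].
  apply: partition_replace2 tilT.1 aT bT _ (slab_neq0 sc) (slab_neq0 sd) dcd _.
  - exact: disjoint_neq dab (slab_neq0 sa).
  - by rewrite defab defcd.
exists T'; split.
- have tilT' : is_tiling T'.
    split=> // S; rewrite !inE => /orP[/andP[_ ST] | /orP[/eqP-> | /eqP->]] //.
    exact: tilT.2.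
  split=> //; split=> //.
  exists (embed k a), (embed k b), (embed k c), (embed k d); do !split=> //.
  + exact: disjoint_neq dab (slab_neq0 sa).
  + exists f.1.1.1.1, f.1.1.1.2, (k + f.1.1.2); rewrite defab; split=> //.
    by move: qok khN; rewrite /wcube_ok /box_inside; case: (f.1.1) => [[X Y] Z] /=; lia.
  + by rewrite defcd.
  + by apply: contraNneq c_new => <-; rewrite !inE eqxx.
- move=> z x y zk xs ys; rewrite !inE (canT zk xs ys) andbT.
  by rewrite (negbTE (embed_neq_low x y khN aW zk)) (negbTE (embed_neq_low x y khN bW zk)).
- move=> e; rewrite /window /flip_pred.
  have [eW | eW] /= := boolP (e \in wslabs h cr); last first.
    by apply/esym/negbTE; apply: contra eW => /(cube_pair_ok cr qok o2).
  by rewrite !inE pab pcd !inE !(embed_eq khN sep) // andbC.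
Qed.


End WindowOfTiling.

(** * Sweeping the box *)

Fixpoint base_val (B : nat) (v : seq nat) : nat :=
  if v is a :: v' then a * B ^ size v' + base_val B v' else 0.

Lemma base_val_lt B v : all (fun a => a < B) v -> base_val B v < B ^ size v.
Proof.
elim: v => [|a v IH] /=; first by rewrite expn0.
case/andP => aB /IH vB; rewrite expnS.
apply: (@leq_trans (a.+1 * B ^ size v)); first by rewrite mulSn addnC ltn_add2r.
by rewrite leq_mul2r aB orbT.
Qed.

Lemma lexlt_base_val B v w : size v = size w ->
  all (fun a => a < B) v -> all (fun a => a < B) w -> lexlt v w -> base_val B v < base_val B w.
Proof.
elim: v w => [|a v IH] [|b w] //= [vw] /andP[aB vB] /andP[bB wB] /orP[ab | /andP[/eqP <- lt]].
- rewrite vw; apply: (@leq_trans (a.+1 * B ^ size w)).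
    by rewrite mulSn addnC ltn_add2r -vw base_val_lt.
  by apply: leq_trans (leq_addr _ _); rewrite leq_mul2r ab orbT.
- by rewrite vw ltn_add2l IH.
Qed.

Section PotentialBound.
Variables (h : nat) (cr : bool).
Local Notation B := (6 * size (wslabs h cr)).+1.

Lemma size_potential m : size (potential h cr m) = 2 * h.
Proof.
rewrite /potential -[in RHS](size_iota 0 h); elim: (iota 0 h) => //= z s IH.
by rewrite IH mulnS.
Qed.

Lemma potential_lt m : all (fun a => a < B) (potential h cr m).
Proof.
rewrite /potential; elim: (iota 0 h) => //= z s ->; rewrite andbT.
set l := layer h cr m z.
have := count_size (fun d => ori d == 0) l.
have := count_size (fun d => [&& ori d != 0, within_window h d & has (partners d) l]) l.
have : size l <= size (wslabs h cr) by rewrite size_filter count_size.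
rewrite !ltnS; lia.
Qed.

Definition potential_gap (m : pred wslab) := B ^ (2 * h) - base_val B (potential h cr m).

Lemma potential_gap_lt m1 m2 : lexlt (potential h cr m1) (potential h cr m2) ->
  potential_gap m2 < potential_gap m1.
Proof.
move=> lt; have := base_val_lt (potential_lt m2); rewrite size_potential.
have size12 : size (potential h cr m1) = size (potential h cr m2) by rewrite !size_potential.
have := lexlt_base_val size12 (potential_lt m1) (potential_lt m2) lt.
by rewrite /potential_gap; lia.
Qed.

Lemma eq_potential m1 m2 : m1 =1 m2 -> potential h cr m1 = potential h cr m2.
Proof.
move=> em; rewrite /potential; congr flatten; apply: eq_map => z.
by congr layer_weight; apply: eq_filter => d; rewrite em.
Qed.

End PotentialBound.

Section LayerStep.
Variables (N k h : nat) (cr : bool).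
Hypotheses (khN : k + h <= N) (top : cr || (k + h == N)) (cert : window_certified h cr).
Implicit Types T : {set {set cell N}}.

Lemma window_step T : is_tiling T -> canonical_below k T ->
  canonical_below k.+1 T \/ exists T', [/\ flip T T', canonical_below k T' &
     lexlt (potential h cr (window k h cr T)) (potential h cr (window k h cr T'))].
Proof.
move=> tilT canT; have /and3P[uniqW sepW srch] := cert.
have tilW := window_tiling_of tilT canT khN top sepW.
have sub0 : {subset [::] <= window k h cr T} by [].
case: (search_sound uniqW tilW srch sub0) => [canon | [f /and3P[fok pairT lt]]].
  left=> z x y; rewrite ltnS leq_eqVlt => /orP[/eqP-> | zk] xs ys; last exact: canT.
  have : window k h cr T (0, x, y, 0).
    by apply: (allP canon); move: xs ys; rewrite !inE => /orP[]/eqP-> /orP[]/eqP->.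
  by case/andP => _; rewrite /embed /= addn0.
right; have [T' [flipT canT' winT']] := window_flip tilT canT khN top sepW fok pairT.
by exists T'; rewrite (eq_potential _ _ winT').
Qed.

Lemma layer_step T : is_tiling T -> canonical_below k T ->
  exists T', [/\ clos_refl_trans _ (@flip N) T T', is_tiling T' & canonical_below k.+1 T'].
Proof.
move=> tilT canT; have [m] := ubnP (potential_gap h cr (window k h cr T)).
elim: m T tilT canT => // m IH T tilT canT gapT.
have [canT1 | [T' [flipT canT' lt]]] := window_step tilT canT.
  by exists T; split=> //; apply: rt_refl.
have [|T'' [rT' tilT'' canT'']] := IH T' flipT.2.1 canT'.
  by apply: leq_trans (potential_gap_lt lt) _; rewrite -ltnS.
by exists T''; split=> //; apply: rt_trans rT'; apply: rt_step.
Qed.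

End LayerStep.

Lemma certified_window N k : k < N ->
  exists h cr, [/\ k + h <= N, cr || (k + h == N) & window_certified h cr].
Proof.
move=> kN; case: (leqP (k + 4) N) => k4; first by exists 4, true; rewrite k4 window_certified4.
have [e | [e | e]] : N - k = 1 \/ N - k = 2 \/ N - k = 3 by lia.
- by exists 1, false; rewrite window_certified1; split=> //; apply/eqP; lia.
- by exists 2, false; rewrite window_certified2; split=> //; apply/eqP; lia.
- by exists 3, false; rewrite window_certified3; split=> //; apply/eqP; lia.
Qed.

Lemma canonicalize N k (T : {set {set cell N}}) : is_tiling T -> canonical_below k T ->
  exists T', [/\ clos_refl_trans _ (@flip N) T T', is_tiling T' & canonical_below N T'].
Proof.
move eN : (N - k) => m; elim: m k T eN => [|m IH] k T eN tilT canT.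
  by exists T; split=> //; [apply: rt_refl | move=> z x y zN; apply: canT; lia].
have kN : k < N by lia.
have [h [cr [khN top cert]]] := certified_window kN.
have [T1 [r1 tilT1 canT1]] := layer_step khN top cert tilT canT.
have [|T2 [r2 tilT2 canT2]] := IH k.+1 T1 _ tilT1 canT1; first lia.
by exists T2; split=> //; apply: rt_trans r2.
Qed.

Theorem proposition5p2 (N : nat) (HN : 0 < N) : one_flip_component N.
Proof.
split; first by exists (canon_tiling N); apply: canon_tiling_is_tiling.
move=> T T' tilT tilT'.
have [T1 [r1 til1 can1]] := canonicalize tilT (canonical_below0 T).
have [T2 [r2 til2 can2]] := canonicalize tilT' (canonical_below0 T').
rewrite (canonical_tiling_unique til1 til2 can1 can2) in r1.
exact: rt_trans r1 (flip_connected_sym r2).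
Qed.
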